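(* The set $\mathrm{Rec}(Z^* )$ of recognizable subsets of $Z^*$ is uncountable.
   Context: $Z^*$ is the commutative group of finite sequences of integers whose last entry is non-zero (including the empty sequence), with pointwise addition (shorter sequence padded by zeros) and the empty sequence as unit; equivalently the free abelian group on countably many generators, isomorphic to $(\mathbb{Q}_{>0},\times,1)$. A subset $S$ of a monoid $M$ is recognizable if there exist a finite monoid $N$, a monoid morphism $\varphi\colon M \to N$ and a subset $T \subseteq N$ with $S = \varphi^{-1}(T)$. *)

From mathcomp Require Import all_boot all_order all_algebra.
Set Implicit Arguments. Unset Strict Implicit. Unset Printing Implicit Defensive.
Import GRing.Theory.
Local Open Scope ring_scope.

(* Z^* : finite sequences of integers whose last entry is non-zero
   (the empty sequence included). [last 1 s] is 1 on the empty sequence. *)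
Definition zs_wf (s : seq int) : bool := last 1 s != 0.

Definition Zstar := {s : seq int | zs_wf s}.

Fixpoint zs_trim (s : seq int) : seq int :=
  match s with
  | [::] => [::]
  | x :: s' => let t := zs_trim s' in
               if (t == [::]) && (x == 0) then [::] else x :: t
  end.

Fixpoint zs_padd (s t : seq int) : seq int :=
  match s, t with
  | [::], _ => t
  | _, [::] => s
  | x :: s', y :: t' => (x + y) :: zs_padd s' t'
  end.

Lemma zs_trim_wf s : zs_wf (zs_trim s).
Proof.
rewrite /zs_wf; elim: s => [|x s IH] //=.
case Ht: (zs_trim s == [::]).
  by move/eqP: Ht => ->; case Hx: (x == 0) => //=; rewrite Hx.
rewrite andFb /=.
case: (zs_trim s) Ht IH => [//|y t] _ /=.
by elim/last_ind: t y => [|t z _] y //=; rewrite !last_rcons.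
Qed.

Definition zs_add (a b : Zstar) : Zstar :=
  exist _ (zs_trim (zs_padd (val a) (val b))) (zs_trim_wf _).

Definition zs_unit : Zstar := exist _ [::] (isT : zs_wf [::]).

Definition recognizable (S : Zstar -> Prop) : Prop :=
  exists (N : finType) (op : N -> N -> N) (e : N),
    [/\ associative op, left_id e op & right_id e op] /\
    exists (phi : Zstar -> N) (T : {pred N}),
      [/\ phi zs_unit = e,
          forall a b, phi (zs_add a b) = op (phi a) (phi b)
        & forall x, S x <-> phi x \in T].

Definition countable_family (F : (Zstar -> Prop) -> Prop) : Prop :=
  exists f : nat -> (Zstar -> Prop),
    forall S, F S -> exists n, forall x, f n x <-> S x.

From mathcomp Require Import all_boot all_order all_algebra.
From Stdlib Require Import ClassicalEpsilon.
Set Implicit Arguments. Unset Strict Implicit. Unset Printing Implicit Defensive.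
Import GRing.Theory.
Local Open Scope ring_scope.

(* Every sequence w in a finite abelian group V defines a morphism Z^* -> V
   sending the n-th basis vector e_n to w n, so for each P : nat -> bool the
   preimage of 1 under the morphism to Z/2 given by w n = P n is recognizable
   and contains exactly those e_n with P n. Hence the recognizable sets realise
   every pattern on the basis vectors, and Cantor's diagonal argument rules out
   any enumeration of them. *)

Fixpoint zs_pair (V : zmodType) (w : nat -> V) (s : seq int) : V :=
  if s is x :: s' then w 0%N *~ x + zs_pair (fun n => w n.+1) s' else 0.

Lemma zs_pair_trim (V : zmodType) (w : nat -> V) s :
  zs_pair w (zs_trim s) = zs_pair w s.
Proof.
elim: s w => [|x s IH] w //=.
case: ifP => [/andP[/eqP trim0 /eqP ->]|_] /=; last by rewrite IH.
by rewrite -IH trim0 mulr0z addr0.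
Qed.

Lemma zs_pair_padd (V : zmodType) (w : nat -> V) s t :
  zs_pair w (zs_padd s t) = zs_pair w s + zs_pair w t.
Proof.
elim: s w t => [|x s IH] w [|y t] /=; rewrite ?add0r ?addr0 //.
by rewrite IH mulrzDr addrACA.
Qed.

Lemma zs_basis_wf n : zs_wf (rcons (nseq n 0) 1).
Proof. by rewrite /zs_wf last_rcons. Qed.

Definition zs_basis n : Zstar := exist (fun s => zs_wf s) _ (zs_basis_wf n).

Lemma zs_pair_basis (V : zmodType) (w : nat -> V) n :
  zs_pair w (val (zs_basis n)) = w n.
Proof.
elim: n w => [|n IH] w /=; first by rewrite addr0.
by rewrite IH mulr0z add0r.
Qed.

Lemma recognizable_zs_pair (V : finZmodType) (w : nat -> V) (T : {pred V}) :
  recognizable (fun x => zs_pair w (val x) \in T).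
Proof.
exists V, +%R, 0; split; first by split; [exact: addrA | exact: add0r | exact: addr0].
exists (fun x => zs_pair w (val x)), T; split=> //= a b.
by rewrite zs_pair_trim zs_pair_padd.
Qed.

Lemma recognizable_basis_pattern (P : nat -> bool) :
  exists2 S, recognizable S & forall n, S (zs_basis n) <-> P n.
Proof.
pose w n : 'Z_2 := (P n)%:R.
exists (fun x => zs_pair w (val x) \in pred1 1); first exact: recognizable_zs_pair.
by move=> n; rewrite zs_pair_basis /w; case: (P n).
Qed.

Theorem mainTheorem14 : ~ countable_family recognizable.
Proof.
move=> [f enum_f].
pose P n : bool := if excluded_middle_informative (f n (zs_basis n)) then false else true.
have [S recS SP] := recognizable_basis_pattern P.
have [n fnS] := enum_f S recS.
have := fnS (zs_basis n); rewrite SP /P.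
by case: excluded_middle_informative => [fn [/(_ fn)] | fn [_ /(_ isT)]].
Qed.
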